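(* Let $G$ be a finite group such that every irreducible complex character of $G$ has degree at most $2$. Then $s(G)\leq 2\,\Gamma_e(G)$.
   Context: For a finite group $G$, $s(G)$ is the sum of all entries of its complex character table and $\Gamma_e(G)$ is the sum of the degrees of its irreducible complex characters. *)

From mathcomp Require Import all_boot all_order all_algebra all_fingroup all_solvable all_field all_character.
Set Implicit Arguments. Unset Strict Implicit. Unset Printing Implicit Defensive.
Import GRing.Theory Num.Theory.
Local Open Scope ring_scope.

Definition char_table_sum (gT : finGroupType) (G : {group gT}) : algC :=
  \sum_(i < Nirr G) \sum_(j < Nirr G) character_table G i j.

Definition sum_irr_degrees (gT : finGroupType) (G : {group gT}) : algC :=
  \sum_(i : Iirr G) 'chi[G]_i 1%g.

From mathcomp Require Import all_boot all_order all_algebra all_fingroup all_solvable all_field all_character.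
Import Order.TTheory GRing.Theory Num.Theory.
Local Open Scope ring_scope.

(* Write theta(x) for the column sum of the character table at x and lambda
   for the sum of the linear characters.  Multiplication by a linear character
   permutes the linear characters, so lambda^2 = |G : G'| lambda and lambda is
   nonnegative.  When all degrees are 1 or 2, 2 theta = rho + lambda with rho
   the regular character, so theta >= 0 as well.  Hence s(G), the sum of
   theta over class representatives, is at most the sum of theta over all of
   G, which by the first orthogonality relation is |G| = sum chi(1)^2, and
   this is at most 2 sum chi(1). *)

Lemma sum_classes_repr_le (gT : finGroupType) (G : {group gT})
    (R : numDomainType) (f : gT -> R) :
  {in G, forall x, 0 <= f x} ->
  \sum_(xG in classes G) f (repr xG) <= \sum_(x in G) f x.
Proof.
move=> f_ge0; have /and3P[/eqP cover_classes triv_classes _] := classes_partition G.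
rewrite -{2}cover_classes big_trivIset //=; apply: ler_sum => xG clxG.
have /repr_classesP[Gr def_xG] := clxG.
rewrite (bigD1 (repr xG)) /=; last exact: mem_repr_classes clxG.
rewrite lerDl; apply: sumr_ge0 => y /andP[+ _].
by rewrite def_xG => /(subsetP (class_subG Gr (subxx G)))/f_ge0.
Qed.

Section ColumnSums.

Set Implicit Arguments. Unset Strict Implicit.

Variables (gT : finGroupType) (G : {group gT}).

Definition irr_colsum (x : gT) : algC := \sum_i 'chi[G]_i x.

Definition lin_char_sum (x : gT) : algC :=
  \sum_(i | 'chi[G]_i \is a linear_char) 'chi[G]_i x.

Lemma lin_char_sumMl j x :
  'chi[G]_j \is a linear_char -> 'chi_j x * lin_char_sum x = lin_char_sum x.
Proof.
move=> lin_j; pose h i := cfIirr ('chi[G]_j * 'chi_i).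
have hE i : 'chi_(h i) = 'chi_j * 'chi_i by rewrite cfIirrE ?mul_lin_irr ?mem_irr.
have h_inj : injective h.
  by move=> i1 i2 eq_h; apply/irr_inj/(mulrI (lin_char_unitr lin_j)); rewrite -!hE eq_h.
rewrite mulr_sumr /lin_char_sum [RHS](reindex_inj h_inj) /=.
apply: eq_big => [i | i _]; last by rewrite hE cfunE.
rewrite hE; apply/idP/idP => [lin_i | lin_ji]; first exact: rpredM.
by rewrite -(mulKr (lin_char_unitr lin_j) 'chi_i) rpredM ?rpredV.
Qed.

Lemma lin_char_sum_sqr x :
  lin_char_sum x ^+ 2 = (#|G : G^`(1)|%g)%:R * lin_char_sum x.
Proof.
rewrite expr2 {1}/lin_char_sum mulr_suml.
rewrite (eq_bigr (fun=> lin_char_sum x)) => [|j lin_j]; last exact: lin_char_sumMl.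
by rewrite sumr_const -card_lin_irr mulr_natl.
Qed.

Lemma lin_char_sum_ge0 x : 0 <= lin_char_sum x.
Proof.
have : lin_char_sum x * (lin_char_sum x - (#|G : G^`(1)|%g)%:R) = 0.
  by rewrite mulrBr -expr2 lin_char_sum_sqr mulrC subrr.
by move/eqP; rewrite mulf_eq0 subr_eq0 => /orP[] /eqP ->.
Qed.

Lemma sum_irr_colsum : \sum_(x in G) irr_colsum x = #|G|%:R.
Proof.
have sum_irr i : \sum_(x in G) 'chi[G]_i x = #|G|%:R * (i == 0)%:R.
  rewrite -cfdot_irr cfdotE irr0 mulVKf ?neq0CG //.
  by apply: eq_bigr => x Gx; rewrite cfun1E Gx conjC1 mulr1.
rewrite exchange_big /= (eq_bigr _ (fun i _ => sum_irr i)) -mulr_sumr.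
by rewrite (bigD1 0) //= big1 ?addr0 ?mulr1 // => i /negbTE ->.
Qed.

Lemma char_table_sum_classes :
  char_table_sum G = \sum_(xG in classes G) irr_colsum (repr xG).
Proof.
rewrite /char_table_sum exchange_big /= [RHS](reindex_irr_class G).
by apply: eq_bigr => j _; apply: eq_bigr => i _; rewrite mxE.
Qed.

Hypothesis irr1_le2 : forall i : Iirr G, 'chi[G]_i 1%g <= 2.

Lemma mul2_irr_colsum x : 2 * irr_colsum x = cfReg G x + lin_char_sum x.
Proof.
rewrite cfReg_sum sum_cfunE /irr_colsum mulr_sumr /lin_char_sum.
rewrite [X in _ + X]big_mkcond -big_split /=.
apply: eq_bigr => i _; rewrite cfunE qualifE /= irr_char /=.
have := irr1_le2 i; have := irr1_gt0 i; have /natrP[n ->] := Cnat_irr1 i.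
rewrite ltr0n ler_nat; case: n => [|[|[|n]]] //= _ _.
- by rewrite eqxx mul1r mulr_natl.
- by rewrite (eqr_nat _ 2 1) addr0.
Qed.

Lemma irr_colsum_ge0 x : 0 <= irr_colsum x.
Proof.
rewrite -(pmulr_rge0 _ (ltr0n _ 2)) mul2_irr_colsum addr_ge0 //.
  by rewrite cfRegE mulrn_wge0.
exact: lin_char_sum_ge0.
Qed.

Lemma card_le_2sum_irr_degrees : #|G|%:R <= 2 * sum_irr_degrees G.
Proof.
rewrite -irr_sum_square /sum_irr_degrees mulr_sumr; apply: ler_sum => i _.
by rewrite expr2 ler_wpM2r ?irr1_le2 ?ltW ?irr1_gt0.
Qed.

End ColumnSums.

Theorem proposition2p12 (gT : finGroupType) (G : {group gT})
  (hdeg : forall i : Iirr G, 'chi[G]_i 1%g <= 2) :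
  char_table_sum G <= 2 * sum_irr_degrees G.
Proof.
rewrite char_table_sum_classes.
apply: le_trans _ (card_le_2sum_irr_degrees hdeg); rewrite -sum_irr_colsum.
by apply: sum_classes_repr_le => x _; apply: irr_colsum_ge0.
Qed.
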